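(* Let $A\subseteq\mathbb{R}$ be a closed set with smallest element $\theta_*$, and let $c:A\to\mathbb{R}$ be nondecreasing and left-continuous with $c(\theta_* )=0$ and $c(x)>0$ for all $x\in A$ with $x>\theta_*$; if $A$ is unbounded, assume further that $\inf\{c(x)/x : x\in A,\ x\ge y\}\uparrow\infty$ as $y\uparrow\infty$. Define $\phi(y)=\sup_{x\in A}\{yx-c(x)\}$ for $y\ge 0$, and let $\psi(y)$ be the smallest element of $A$ attaining this supremum. Then: (i) $\psi$ is right-continuous at $0$; (ii) $\phi_*\equiv-\inf\{\phi(y):y\ge0\}<\infty$ if and only if $A$ has a nonnegative element; (iii) if $A$ is unbounded, then $\psi(y)\to\infty$ and $\phi(y)\to\infty$ as $y\to\infty$; (iv) if $A$ is bounded, then $\psi(y)\to\theta^*$ as $y\to\infty$, where $\theta^*\equiv\sup A$.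
   Context: Under the stated assumptions on $A$ and $c$, for every $y\ge0$ the supremum defining $\phi(y)$ is finite and the set of maximizers in $A$ is nonempty and has a smallest element, so $\psi(y)=\inf\arg\max_{x\in A}\{yx-c(x)\}$ is well defined. It is also known that $\psi$ is nondecreasing and left-continuous on $[0,\infty)$ and $\phi(y)=\int_0^y\psi(u)\,du$ for $y\ge 0$. *)

From HB Require Import structures.
From mathcomp Require Import all_boot all_order all_algebra.
From mathcomp Require Import all_classical all_reals all_analysis.
Set Implicit Arguments. Unset Strict Implicit. Unset Printing Implicit Defensive.
Import Order.TTheory GRing.Theory Num.Theory.
Import numFieldNormedType.Exports.
Local Open Scope classical_set_scope.
Local Open Scope ring_scope.

Definition phi (R : realType) (A : set R) (c : R -> R) (y : R) : R :=
  sup [set y * x - c x | x in A].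

Definition psi (R : realType) (A : set R) (c : R -> R) (y : R) : R :=
  inf [set x | A x /\ y * x - c x = phi A c y].

Definition phi_star (R : realType) (A : set R) (c : R -> R) : \bar R :=
  (- ereal_inf [set (phi A c y)%:E | y in [set y : R | (0 <= y)%R]])%E.

From HB Require Import structures.
From mathcomp Require Import all_boot all_order all_algebra.
From mathcomp Require Import all_classical all_reals all_analysis.
From mathcomp Require Import ring lra.
Import Order.TTheory GRing.Theory Num.Theory.
Import numFieldNormedType.Exports.
Local Open Scope classical_set_scope.
Local Open Scope ring_scope.
Set Implicit Arguments. Unset Strict Implicit.

(* The maximization defining phi and psi is a maximization of the upper
   semicontinuous payoff x |-> y x - c x (c is nondecreasing and
   left-continuous); the growth of c, or the boundedness of A, confines the
   maximizers for y in [0, y0] to a compact set, so maximizers exist and phi,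
   psi can be computed from them.  Comparing with theta_s, every maximizer q
   satisfies c q <= y (q - theta_s), which forces q close to theta_s as y
   goes to 0 because c stays positive away from theta_s.  Conversely, a point
   x of A beats everything below M as soon as c x < y (x - M), which drives
   psi to +oo, resp. to sup A, as y grows. *)

Section real_sets.
Variable R : realType.

Lemma closed_sup_mem (A : set R) : closed A -> A !=set0 -> has_ubound A -> A (sup A).
Proof. by move=> cA A0 ubA; apply: cA; exact: closure_sup. Qed.

Lemma closed_inf_mem (A : set R) : closed A -> A !=set0 -> has_lbound A -> A (inf A).
Proof.
move=> cA A0 lbA; apply: (itv_closed_infimums A0 cA).
by split=> [x Ax|y lby]; [exact: ge_inf | exact: lb_le_inf].
Qed.

Lemma not_ubound_gt (A : set R) M : ~ has_ubound A -> exists2 x, A x & M < x.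
Proof.
move=> unbounded; apply: contrapT => none; apply: unbounded; exists M => x Ax.
by rewrite leNgt; apply/negP => Mx; apply: none; exists x.
Qed.

End real_sets.

Lemma compact_usc_max (T : topologicalType) (R : realType) (f : T -> R) (K : set T) :
  compact K -> K !=set0 -> has_ubound (f @` K) ->
  (forall q e, K q -> 0 < e -> \forall z \near q, K z -> f z < f q + e) ->
  exists2 p, K p & forall x, K x -> f x <= f p.
Proof.
move=> cK [k Kk] ubf usc.
have supf : has_sup (f @` K) by split=> //; exists (f k), k.
set s := sup (f @` K).
suff [p Kp sp] : exists2 p, K p & s <= f p.
  by exists p => // x Kx; apply: le_trans sp; apply: sup_upper_bound => //; exists x.
apply: contrapT => nomax.
have lt_s p : K p -> f p < s.
  by move=> Kp; rewrite ltNge; apply/negP => sp; apply: nomax; exists p.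
pose F := filter_from [set e : R | 0 < e] (fun e => K `&` [set x | s - e < f x]).
have PF : ProperFilter F.
  apply: filter_from_proper => [|e e0]; last first.
    by have [_ [x Kx <-] sx] := sup_adherent e0 supf; exists x.
  apply: filter_from_filter => [|i j i0 j0]; first by exists 1; rewrite /= ltr01.
  exists (Num.min i j); first by rewrite /= lt_min i0 j0.
  move=> x [Kx /= sx]; have mi : Num.min i j <= i by rewrite ge_min lexx.
  have mj : Num.min i j <= j by rewrite ge_min lexx orbT.
  by split; split=> //=; lra.
have FK : F K by exists 1 => //= x [].
have [q [Kq clq]] := cK F PF FK.
pose eta := (s - f q) / 2.
have eta0 : 0 < eta by rewrite divr_gt0 // subr_gt0 lt_s.
have Feta : F (K `&` [set x | s - eta < f x]) by exists eta.
have [z [[Kz /= sz] near_q]] := clq _ _ Feta (usc q eta Kq eta0).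
have mid : s - eta = f q + eta by rewrite /eta; field.
by have := near_q Kz; lra.
Qed.

Section maximizers.
Variables (R : realType) (A : set R) (c : R -> R).

Definition maximizer (y p : R) :=
  A p /\ forall x, A x -> y * x - c x <= y * p - c p.

Lemma phi_maximizer y p : maximizer y p -> phi A c y = y * p - c p.
Proof.
move=> [Ap max_p]; have ub : ubound [set y * x - c x | x in A] (y * p - c p).
  by move=> _ [x Ax <-]; exact: max_p.
have attained : [set y * x - c x | x in A] (y * p - c p) by exists p.
apply/le_anti/andP; split; first by apply: ge_sup => //; exists (y * p - c p).
by apply: sup_upper_bound => //; split; exists (y * p - c p).
Qed.

Lemma psiE y p : maximizer y p -> psi A c y = inf (maximizer y).
Proof.
move=> max_p; rewrite /psi (phi_maximizer max_p); congr inf.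
case: max_p => Ap max_p; apply/seteqP; split=> [q [Aq eq_q]|q [Aq max_q]].
  by split=> // x Ax; rewrite eq_q; exact: max_p.
by split=> //; apply/le_anti/andP; split; [exact: max_p | exact: max_q].
Qed.

Lemma psi_le_maximizer y p : has_lbound A -> maximizer y p -> psi A c y <= p.
Proof.
move=> [l lbA] max_p; rewrite (psiE max_p); apply: ge_inf => //.
by exists l => q [Aq _]; exact: lbA.
Qed.

Lemma lb_le_psi y p L : maximizer y p -> (forall q, maximizer y q -> L <= q) ->
  L <= psi A c y.
Proof. by move=> max_p lbL; rewrite (psiE max_p); apply: lb_le_inf => //; exists p. Qed.

End maximizers.

Section proposition2.
Variables (R : realType) (A : set R) (c : R -> R) (theta : R).
Hypothesis closedA : closed A.
Hypothesis A_theta : A theta.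
Hypothesis theta_le : forall x, A x -> theta <= x.
Hypothesis c_mono : forall x y, A x -> A y -> x <= y -> c x <= c y.
Hypothesis c_lcont : forall x, A x -> c z @[z --> within A (x^'-)] --> c x.
Hypothesis c_theta : c theta = 0.
Hypothesis c_pos : forall x, A x -> theta < x -> 0 < c x.
Hypothesis c_growth : ~ has_ubound A ->
  (ereal_inf [set (c x / x)%:E | x in [set x | A x /\ y <= x]]) @[y --> +oo] --> +oo%E.

Lemma c_ge0 x : A x -> 0 <= c x.
Proof. by move=> Ax; rewrite -c_theta c_mono ?theta_le. Qed.

Lemma payoff_usc y q e : 0 <= y -> A q -> 0 < e ->
  \forall z \near q, A z -> y * z - c z < y * q - c q + e.
Proof.
move=> y0 Aq e0.
have c_left : \forall z \near q, z < q -> A z -> c q - e < c z.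
  have : \forall z \near within A q^'-, c q - e < c z.
    by apply: (cvgr_gt (c q)); [exact: c_lcont | rewrite ltrBlDr ltrDl].
  by rewrite near_withinE /at_left near_withinE.
pose d := e / (y + 1).
have d0 : 0 < d by rewrite divr_gt0 //; lra.
have yd : y * d + d = e by rewrite /d; field; lra.
near=> z => Az; have [zq|qz] := ltP z q.
  have := ler_wpM2l y0 (ltW zq); have : c q - e < c z by move: zq Az; near: z.
  lra.
have : `|q - z| < d by near: z; apply: (nbhsx_ballx q d d0).
rewrite distrC ger0_norm ?subr_ge0 // => zqd.
have := c_mono Aq Az qz; have := ler_wpM2l y0 (ltW zqd); lra.
Unshelve. all: by end_near.
Qed.

Lemma exists_maximizer_of_far_bound y B : 0 <= y ->
  (forall x, A x -> B < x -> y * x - c x < y * theta) -> exists p, maximizer A c y p.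
Proof.
move=> y0 far; pose b := Num.max B theta; pose K := A `&` `[theta, b].
have Ktheta : K theta by split=> //=; rewrite in_itv /= lexx le_max lexx orbT.
have cK : compact K.
  apply: (@subclosed_compact _ _ `[theta, b]); last by move=> x [].
    exact: closedI closedA (@itv_closed _ _ _ _).
  exact: segment_compact.
have ubK : has_ubound [set y * x - c x | x in K].
  exists (y * b) => fx [x [Ax]]; rewrite /= in_itv /= => /andP[_ xb] <-.
  by have := c_ge0 Ax; have := ler_wpM2l y0 xb; lra.
have uscK q e : K q -> 0 < e ->
    \forall z \near q, K z -> y * z - c z < y * q - c q + e.
  move=> [Aq _] e0; apply: filterS (payoff_usc y0 Aq e0) => z usc_z [Az _].
  exact: usc_z.
have [p [Ap _] max_p] := compact_usc_max cK (ex_intro _ _ Ktheta) ubK uscK.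
exists p; split=> // x Ax; have [xb|bx] := leP x b.
  by apply: max_p; split=> //=; rewrite in_itv /= xb theta_le.
have Bx : B < x by apply: le_lt_trans bx; rewrite le_max lexx.
have := max_p _ Ktheta; have := far x Ax Bx; rewrite c_theta; lra.
Qed.

Lemma far_payoff_lt_theta y0 : 0 <= y0 -> exists B,
  forall y x, 0 <= y <= y0 -> A x -> B < x -> y * x - c x < y * theta.
Proof.
move=> y00; have [[M ubM]|unbounded] := pselect (has_ubound A).
  by exists M => y x _ Ax; rewrite ltNge ubM.
have [Y [_ growY]] := proj1 (cvgeyPge _) (c_growth unbounded) (y0 + 1).
pose Y1 := Num.max Y 0 + 1.
have Y1Y : Y < Y1 by rewrite /Y1; have := le_max Y Y 0; rewrite lexx /=; lra.
have Y10 : 0 < Y1 by rewrite /Y1; have := le_max 0 Y 0; rewrite lexx orbT /=; lra.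
exists (Num.max Y1 (y0 * `|theta| + 1)) => y x /andP[y0' yy0] Ax.
rewrite gt_max => /andP[xY1 xtheta].
have x0 : 0 < x by lra.
have cx_ge : (y0 + 1) * x <= c x.
  rewrite -ler_pdivlMr // -lee_fin; apply: le_trans (growY Y1 Y1Y) _.
  by apply: ereal_inf_lbound; exists x => //; split=> //; exact: ltW.
have yx_le : y * x <= y0 * x by rewrite ler_wpM2r // ltW.
have ytheta_ge : - (y0 * `|theta|) <= y * theta.
  have : y * `|theta| <= y0 * `|theta| by rewrite ler_wpM2r.
  have : - `|theta| <= theta by rewrite -lerNl ler_normr lexx orbT.
  by move=> /(ler_wpM2l y0'); rewrite mulrN; lra.
lra.
Qed.

Lemma maximizer_cost_le y q : maximizer A c y q -> c q <= y * (q - theta).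
Proof. by move=> [_ /(_ _ A_theta)]; rewrite c_theta; lra. Qed.

Lemma exists_maximizer y : 0 <= y -> exists p, maximizer A c y p.
Proof.
move=> y0; have [B far] := far_payoff_lt_theta y0.
by apply: (exists_maximizer_of_far_bound (B := B) y0) => x; apply: far; rewrite y0 lexx.
Qed.

Lemma maximizers_bounded y0 : 0 <= y0 -> exists B,
  forall y q, 0 <= y <= y0 -> maximizer A c y q -> q <= B.
Proof.
move=> y00; have [B far] := far_payoff_lt_theta y00.
exists B => y q yy0 max_q; rewrite leNgt; apply/negP => Bq.
by have := far y q yy0 (proj1 max_q) Bq; have := maximizer_cost_le max_q; lra.
Qed.

Lemma psi_ge_theta y : 0 <= y -> theta <= psi A c y.
Proof.
move=> y0; have [p max_p] := exists_maximizer y0.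
by apply: (lb_le_psi max_p) => q [Aq _]; exact: theta_le.
Qed.

Lemma psi0 : psi A c 0 = theta.
Proof.
apply/le_anti; rewrite psi_ge_theta // andbT.
apply: psi_le_maximizer; first by exists theta.
by split=> // x Ax; rewrite !mul0r c_theta !sub0r lerN2 c_ge0.
Qed.

Lemma maximizers_small e : 0 < e -> exists2 d, 0 < d &
  forall y q, 0 <= y < d -> maximizer A c y q -> q < theta + e.
Proof.
move=> e0; have [far|near_theta] := pselect (exists x, A x /\ theta + e <= x); last first.
  exists 1 => // y q _ [Aq _]; rewrite ltNge; apply/negP => qe.
  by apply: near_theta; exists q.
pose C := A `&` `[theta + e, +oo[.
have C0 : C !=set0 by case: far => x [Ax xe]; exists x; split=> //=; rewrite in_itv /= xe.
have lbC : has_lbound C by exists (theta + e) => x [_]; rewrite /= in_itv /= andbT.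
have [Aa ea] : C (inf C).
  by apply: closed_inf_mem => //; exact: closedI closedA (@rray_closed _ _ _).
move: ea; rewrite /= in_itv /= andbT => ea.
have ca0 : 0 < c (inf C) by apply: c_pos => //; lra.
have [B bounded] := maximizers_bounded (@ler01 R).
pose k := `|B - theta| + 1.
have k0 : 0 < k by rewrite /k; have := normr_ge0 (B - theta); lra.
exists (Num.min 1 (c (inf C) / k)); first by rewrite lt_min ltr01 divr_gt0.
move=> y q /andP[y0]; rewrite lt_min => /andP[y1 yk] max_q.
rewrite ltNge; apply/negP => eq_q.
have qB : q <= B by apply: (bounded y) => //; rewrite y0 ltW.
have cq : c (inf C) <= c q.
  apply: c_mono (proj1 max_q) (ge_inf lbC _) => //.
  by split; [exact: (proj1 max_q) | rewrite /= in_itv /= eq_q].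
have : y * (q - theta) <= y * k.
  apply: ler_wpM2l => //; have := ler_norm (B - theta); rewrite /k; lra.
have := maximizer_cost_le max_q; move: yk; rewrite ltr_pdivlMr //; lra.
Qed.

Lemma psi_cvg0 : psi A c y @[y --> 0^'+] --> psi A c 0.
Proof.
rewrite psi0; apply/cvgrPdist_lt => e e0.
have [d d0 small] := maximizers_small e0.
near=> y.
have y0 : 0 < y by near: y; exact: nbhs_right_gt.
have yd : y < d by near: y; exact: nbhs_right_lt.
have [q max_q] := exists_maximizer (ltW y0).
have psi_q := psi_le_maximizer (ex_intro _ _ theta_le) max_q.
have q_lt : q < theta + e by apply: (small y) => //; rewrite ltW.
rewrite distrC ger0_norm ?subr_ge0 ?psi_ge_theta ?ltW //; lra.
Unshelve. all: by end_near.
Qed.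

Lemma phi_ge y x : 0 <= y -> A x -> y * x - c x <= phi A c y.
Proof.
move=> y0 Ax; have [p max_p] := exists_maximizer y0.
by rewrite (phi_maximizer max_p); exact: (proj2 max_p).
Qed.

Lemma phi_star_lt_pinfty : (phi_star A c < +oo)%E <-> exists x, A x /\ 0 <= x.
Proof.
split=> [phi_lt|[x [Ax x0]]]; last first.
  apply: (@le_lt_trans _ _ (c x)%:E); last exact: ltry.
  rewrite leeNl; apply/ereal_infP => _ [y /= y0 <-]; rewrite lee_fin.
  by have := phi_ge y0 Ax; have := mulr_ge0 y0 x0; lra.
apply: contrapT => nonneg.
have neg x : A x -> x < 0.
  by move=> Ax; rewrite ltNge; apply/negP => x0; apply: nonneg; exists x.
have ubA : has_ubound A by exists 0 => x /neg /ltW.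
have supA : has_sup A by split=> //; exists theta.
have supA0 : sup A < 0 by apply: neg; apply: closed_sup_mem => //; exists theta.
have phi_le y : 0 <= y -> phi A c y <= y * sup A.
  move=> y0; have [p [Ap max_p]] := exists_maximizer y0.
  rewrite (phi_maximizer (conj Ap max_p)).
  by have := c_ge0 Ap; have := ler_wpM2l y0 (sup_upper_bound supA Ap); lra.
have [r r_le] : exists r, forall y, 0 <= y -> r <= phi A c y.
  move: phi_lt; rewrite /phi_star; set S := [set _ | _ in _] => phi_lt.
  have lb y : 0 <= y -> (ereal_inf S <= (phi A c y)%:E)%E.
    by move=> y0; apply: ereal_inf_lbound; exists y.
  move: phi_lt lb; case: ereal_inf => [r||] //= _ lb.
    by exists r => y /lb; rewrite lee_fin.
  by have := lb 0 (lexx 0); rewrite leNgt ltry.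
pose y : R := (`|r| + 1) / - sup A.
have y0 : 0 < y by rewrite divr_gt0 ?oppr_gt0 //; have := normr_ge0 r; lra.
have ysup : y * sup A = - (`|r| + 1) by rewrite /y; field; rewrite lt_eqF.
have := r_le y (ltW y0); have := phi_le y (ltW y0); rewrite ysup.
by have := lerNnormlW (lexx `|r|); lra.
Qed.

Lemma maximizer_ge y x M q : 0 <= y -> A x -> c x < y * (x - M) ->
  maximizer A c y q -> M <= q.
Proof.
move=> y0 Ax cx [Aq max_q]; rewrite leNgt; apply/negP => qM; rewrite mulrBr in cx.
by have := max_q x Ax; have := c_ge0 Aq; have := ler_wpM2l y0 (ltW qM); lra.
Qed.

Lemma psi_ge_near_pinfty x M : A x -> M < x -> \forall y \near +oo, M <= psi A c y.
Proof.
move=> Ax Mx; near=> y.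
have y0 : 0 < y by near: y; apply: nbhs_pinfty_gt; exact: num_real.
have [p max_p] := exists_maximizer (ltW y0).
apply: (lb_le_psi max_p) => q; apply: maximizer_ge (ltW y0) Ax _.
rewrite -ltr_pdivrMr ?subr_gt0 //; near: y; apply: nbhs_pinfty_gt; exact: num_real.
Unshelve. all: by end_near.
Qed.

Lemma psi_cvg_pinfty : ~ has_ubound A -> psi A c y @[y --> +oo] --> +oo.
Proof.
move=> unbounded; apply/cvgryPge => M.
have [x Ax Mx] := not_ubound_gt M unbounded; exact: (psi_ge_near_pinfty Ax Mx).
Qed.

Lemma phi_cvg_pinfty : ~ has_ubound A -> phi A c y @[y --> +oo] --> +oo.
Proof.
move=> unbounded; have [x Ax x0] := not_ubound_gt 0 unbounded.
apply: (@ger_cvgy _ _ _ _ (fun y => y * x - c x)).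
  near=> y; apply: phi_ge Ax; near: y; apply: nbhs_pinfty_ge; exact: num_real.
apply/cvgryPge => M; near=> y; rewrite lerBrDr -(ler_pdivrMr _ _ x0).
by near: y; apply: nbhs_pinfty_ge; exact: num_real.
Unshelve. all: by end_near.
Qed.

Lemma psi_cvg_sup : has_ubound A -> psi A c y @[y --> +oo] --> sup A.
Proof.
move=> ubA; have supA : has_sup A by split=> //; exists theta.
have A_sup : A (sup A) by apply: closed_sup_mem => //; exists theta.
apply/cvgrPdist_le => e e0.
have e_lt : sup A - e < sup A by rewrite ltrBlDr ltrDl.
have psi_ge := psi_ge_near_pinfty A_sup e_lt.
near=> y.
have y0 : 0 <= y by near: y; apply: nbhs_pinfty_ge; exact: num_real.
have [p max_p] := exists_maximizer y0.
have psi_le : psi A c y <= sup A.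
  apply: le_trans (psi_le_maximizer (ex_intro _ _ theta_le) max_p) _.
  exact: (sup_upper_bound supA (proj1 max_p)).
have : sup A - e <= psi A c y by near: y.
rewrite ger0_norm ?subr_ge0 //; lra.
Unshelve. all: by end_near.
Qed.

End proposition2.

Theorem proposition2 (R : realType) (A : set R) (c : R -> R) (theta_s : R) :
  closed A ->
  A theta_s -> (forall x, A x -> theta_s <= x) ->
  (forall x y, A x -> A y -> x <= y -> c x <= c y) ->
  (forall x, A x -> c z @[z --> within A (x^'-)] --> c x) ->
  c theta_s = 0 ->
  (forall x, A x -> theta_s < x -> 0 < c x) ->
  (~ has_ubound A ->
     (ereal_inf [set (c x / x)%:E | x in [set x | A x /\ y <= x]])
        @[y --> +oo] --> +oo%E) ->
  [/\ psi A c y @[y --> 0^'+] --> psi A c 0,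
      (phi_star A c < +oo)%E <-> (exists x, A x /\ 0 <= x),
      ~ has_ubound A ->
        psi A c y @[y --> +oo] --> +oo /\ phi A c y @[y --> +oo] --> +oo &
      has_ubound A -> psi A c y @[y --> +oo] --> sup A].
Proof.
move=> closedA A_theta theta_le c_mono c_lcont c_theta c_pos c_growth; split.
- exact: (psi_cvg0 closedA A_theta theta_le c_mono c_lcont c_theta c_pos c_growth).
- exact: (phi_star_lt_pinfty closedA A_theta theta_le c_mono c_lcont c_theta c_growth).
- move=> unbounded; split.
    exact: (psi_cvg_pinfty closedA A_theta theta_le c_mono c_lcont c_theta c_growth).
  exact: (phi_cvg_pinfty closedA A_theta theta_le c_mono c_lcont c_theta c_growth).
- exact: (psi_cvg_sup closedA A_theta theta_le c_mono c_lcont c_theta c_growth).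
Qed.
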